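(* Let $c_0>0$, $c>0$, $d\in\mathbb Z^+$, and let $\boldsymbol\beta=(\beta_j)_{j\ge1}$ be a sequence of non-negative reals and $(\Upsilon_{\boldsymbol\nu})_{\boldsymbol\nu\in\mathscr F}$ non-negative reals with $\Upsilon_{\boldsymbol 0}\le c_0$ and, for all $\boldsymbol\nu\in\mathscr F$, $$\Upsilon_{\boldsymbol\nu}\le\sum_{\boldsymbol m\le\boldsymbol\nu,\,\boldsymbol m\ne\boldsymbol\nu}\binom{\boldsymbol\nu}{\boldsymbol m}\Upsilon_{\boldsymbol m}c^{|\boldsymbol\nu-\boldsymbol m|}\sum_{\boldsymbol\mu\le\boldsymbol\nu-\boldsymbol m}(|\boldsymbol\mu|+1)!\,\boldsymbol\mu!\,\boldsymbol\beta^{\boldsymbol\mu}\prod_{i\ge1}S(\nu_i-m_i,\mu_i)+c_0c^{|\boldsymbol\nu|}\sum_{\boldsymbol m\le\boldsymbol\nu}\frac{(|\boldsymbol m|+d)!}{d!}\boldsymbol\beta^{\boldsymbol m}\prod_{i\ge1}S(\nu_i,m_i).$$ Then for all $\boldsymbol\nu\in\mathscr F$, $$\Upsilon_{\boldsymbol\nu}\le c_0c^{|\boldsymbol\nu|}\sum_{\boldsymbol m\le\boldsymbol\nu}\mathbb P_{\boldsymbol m}\,\boldsymbol m!\,\boldsymbol\beta^{\boldsymbol m}\prod_{i\ge1}S(\nu_i,m_i),$$ where $\mathbb P_{\boldsymbol 0}:=1$ and $\mathbb P_{\boldsymbol m}:=\frac{(|\boldsymbol m|+d)!}{\boldsymbol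 m!\,d!}+\sum_{\boldsymbol w\le\boldsymbol m,\,\boldsymbol w\ne\boldsymbol m}\mathbb P_{\boldsymbol w}(|\boldsymbol m|-|\boldsymbol w|+1)!$ for $\boldsymbol m\ne\boldsymbol 0$. If the hypotheses hold with equality, so does the conclusion.
   Context: $\mathscr F$ is the set of finitely supported multi-indices in $\mathbb N_0^{\mathbb N}$; $|\boldsymbol\nu|=\sum\nu_j$, $\boldsymbol\nu!=\prod\nu_j!$, $\boldsymbol\beta^{\boldsymbol\nu}=\prod\beta_j^{\nu_j}$, componentwise order, $\binom{\boldsymbol\nu}{\boldsymbol m}=\prod_j\binom{\nu_j}{m_j}$. $S(n,m)=\frac1{m!}\sum_{j=0}^m(-1)^{m-j}\binom mj j^n$ (Stirling numbers of the second kind, $S(0,0)=1$). *)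

From HB Require Import structures.
From mathcomp Require Import all_boot all_order all_algebra.
From mathcomp Require Import finmap.
From mathcomp Require Import boolp classical_sets fsbigop.
From mathcomp Require Import reals.

Set Implicit Arguments.
Unset Strict Implicit.
Unset Printing Implicit Defensive.
Import Order.TTheory GRing.Theory Num.Theory.

Local Open Scope ring_scope.

(* The set F of finitely supported multi-indices N_0^N
   (coordinates indexed by nat, i.e. coordinate j here is coordinate j+1
   of the paper). *)
Definition mi := {fsfun nat -> nat with 0%N}.

Definition mzero : mi := [fsfun].

Definition mabs (nu : mi) : nat := (\sum_(j <- finsupp nu) nu j)%N.
Definition mfact (nu : mi) : nat := (\prod_(j <- finsupp nu) (nu j)`!)%N.
Definition mpow {R : nzRingType} (beta : nat -> R) (nu : mi) : R :=
  \prod_(j <- finsupp nu) beta j ^+ nu j.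
Definition mle (m nu : mi) : bool := all (fun j => (m j <= nu j)%N) (finsupp m).
Definition msub (nu m : mi) : mi := [fsfun j in finsupp nu => (nu j - m j)%N].
Definition mbinom (nu m : mi) : nat :=
  (\prod_(j <- (finsupp nu `|` finsupp m)%fset) 'C(nu j, m j))%N.

Definition stirling2 {R : fieldType} (n m : nat) : R :=
  (m`!%:R)^-1 * \sum_(j < m.+1) (-1) ^+ (m - j) * 'C(m, j)%:R * (j%:R) ^+ n.

(* prod_{i} S(a_i, b_i) (factors outside the supports are S(0,0) = 1) *)
Definition mstir {R : fieldType} (a b : mi) : R :=
  \prod_(j <- (finsupp a `|` finsupp b)%fset) stirling2 (a j) (b j).

(* The numbers P_m, defined by recursion on |m| (fuel k >= |m|). *)
Fixpoint Pfuel (R : fieldType) (d : nat) (k : nat) (m : mi) {struct k} : R :=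
  match k with
  | 0%N => 1
  | k'.+1 =>
      if m == mzero then 1
      else ((mabs m + d)`!)%:R / ((mfact m * d`!)%N)%:R
           + \sum_(w \in [set w | mle w m && (w != m)])
               Pfuel R d k' w * ((mabs m - mabs w + 1)`!)%:R
  end.

Definition PP {R : fieldType} (d : nat) (m : mi) : R := Pfuel R d (mabs m) m.

Definition rec_rhs {R : realType} (c0 c : R) (d : nat) (beta : nat -> R)
    (Ups : mi -> R) (nu : mi) : R :=
  \sum_(m \in [set m | mle m nu && (m != nu)])
     (mbinom nu m)%:R * Ups m * c ^+ mabs (msub nu m) *
     \sum_(mu \in [set mu | mle mu (msub nu m)])
        ((mabs mu).+1`!)%:R * (mfact mu)%:R * mpow beta mu * mstir (msub nu m) mu
  + c0 * c ^+ mabs nu *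
     \sum_(m \in [set m | mle m nu])
        ((mabs m + d)`!)%:R / (d`!)%:R * mpow beta m * mstir nu m.

Definition bound_rhs {R : realType} (c0 c : R) (d : nat) (beta : nat -> R)
    (nu : mi) : R :=
  c0 * c ^+ mabs nu *
    \sum_(m \in [set m | mle m nu])
       PP d m * (mfact m)%:R * mpow beta m * mstir nu m.

From HB Require Import structures.
From mathcomp Require Import all_boot all_order all_algebra.
From mathcomp Require Import finmap.
From mathcomp Require Import boolp classical_sets functions cardinality fsbigop.
From mathcomp Require Import reals.
From mathcomp Require Import ring lra.

Set Implicit Arguments.
Unset Strict Implicit.
Unset Printing Implicit Defensive.
Import Order.TTheory GRing.Theory Num.Theory.

Local Open Scope ring_scope.

(* Write B(nu) := bound_rhs c0 c d beta nu = c0 c^|nu| bound_sum(nu).  The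
   heart of the proof is that B solves the recursion exactly:
   rec_rhs(B)(nu) = B(nu) (rec_rhs_bound).  Since rec_rhs(U)(nu) is monotone
   in, and depends only on, the values U(m) at m < nu, strong induction along
   the componentwise order then gives Ups <= B, and Ups = B when the
   hypotheses hold with equality.

   Expanding sum_(m <= nu) C(nu,m) bound_sum(m) kernel_sum(nu-m) into a
   triple sum and collapsing the m-sum with mstir_conv turns it into
   2 bound_sum(nu) minus the inhomogeneous term of the recursion. *)

Definition fdiff {R : fieldType} (m : nat) (g : nat -> R) : R :=
  \sum_(s < m.+1) (-1) ^+ (m - s) * 'C(m, s)%:R * g s.

Section FiniteDifferences.
Variable R : fieldType.
Implicit Types g : nat -> R.

Lemma fdiff0 g : fdiff 0 g = g 0%N.
Proof. by rewrite /fdiff big_ord1 /= expr0 !mul1r. Qed.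

Lemma fdiffS m g : fdiff m.+1 g = fdiff m (fun s => g s.+1) - fdiff m g.
Proof.
rewrite /fdiff big_ord_recl /= subn0 bin0 mulr1.
have -> : \sum_(i < m.+1) (-1) ^+ (m.+1 - bump 0 i) * 'C(m.+1, bump 0 i)%:R
              * g (bump 0 i)
  = \sum_(i < m.+1) (-1) ^+ (m - i) * 'C(m, i)%:R * g i.+1
    + \sum_(i < m.+1) (-1) ^+ (m - i) * 'C(m, i.+1)%:R * g i.+1.
  rewrite -big_split /=; apply: eq_bigr => i _.
  by rewrite /bump /= add1n subSS binS natrD mulrDr mulrDl addrC.
rewrite addrCA; congr (_ + _).
rewrite [X in _ = - X]big_ord_recl /= subn0 bin0 mulr1 opprD.
rewrite [X in _ + X = _]big_ord_recr /= bin_small ?ltnSn // mulr0 mul0r addr0.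
rewrite exprS mulN1r mulNr; congr (_ + _).
rewrite -sumrN; apply: eq_bigr => i _.
rewrite /bump /= add1n subnS; case: (m - i)%N (subn_gt0 i m) => [|k].
  by rewrite ltn_ord.
by move=> _ /=; rewrite exprS !mulN1r !mulNr.
Qed.

Lemma fdiffD a b g :
  fdiff a (fun i => fdiff b (fun j => g (i + j)%N)) = fdiff (a + b) g.
Proof.
elim: a g => [|a IH] g; first by rewrite fdiff0.
by rewrite fdiffS addSn fdiffS -!IH.
Qed.

(* Binomial theorem inside a double difference:
   sum_k C(n,k) Delta^a(i^k) Delta^b(j^(n-k)) = Delta^a Delta^b ((i+j)^n). *)
Lemma fdiff_binomial n a b :
  \sum_(k < n.+1) 'C(n, k)%:R * fdiff a (fun i => i%:R ^+ k)
                              * fdiff b (fun j => j%:R ^+ (n - k))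
  = fdiff a (fun i => fdiff b (fun j => ((i + j)%N%:R : R) ^+ n)).
Proof.
rewrite /fdiff.
transitivity (\sum_(k < n.+1) \sum_(i < a.+1) \sum_(j < b.+1)
   ((-1) ^+ (a - i) * 'C(a, i)%:R) * ((-1) ^+ (b - j) * 'C(b, j)%:R) *
   ('C(n, k)%:R * (i%:R ^+ k * j%:R ^+ (n - k)) : R)).
  apply: eq_bigr => k _.
  rewrite -mulrA big_distrlr mulr_sumr; apply: eq_bigr => i _.
  rewrite mulr_sumr; apply: eq_bigr => j _ /=; ring.
rewrite exchange_big; apply: eq_bigr => i _.
rewrite exchange_big mulr_sumr; apply: eq_bigr => j _.
rewrite natrD addrC exprDn !mulr_sumr; apply: eq_bigr => k _.
rewrite -mulr_natl; ring.
Qed.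

End FiniteDifferences.

Section Stirling.
Variable R : numFieldType.
Local Notation S := (@stirling2 R).

Lemma stirling2E n m : S n m = (m`!%:R)^-1 * fdiff m (fun j => j%:R ^+ n).
Proof. by []. Qed.

Lemma fact_neq0 n : (n`!%:R : R) != 0.
Proof. by rewrite pnatr_eq0 -lt0n fact_gt0. Qed.

Lemma stirling2_conv n a b :
  \sum_(k < n.+1) 'C(n, k)%:R * S k a * S (n - k) b
  = 'C(a + b, a)%:R * S n (a + b).
Proof.
transitivity ((a`!%:R)^-1 * (b`!%:R)^-1 *
  \sum_(k < n.+1) 'C(n, k)%:R * fdiff a (fun i => i%:R ^+ k)
                              * fdiff b (fun j => j%:R ^+ (n - k)) : R).
  rewrite mulr_sumr; apply: eq_bigr => k _; rewrite !stirling2E; ring.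
rewrite fdiff_binomial (fdiffD a b (fun s => (s%:R : R) ^+ n)).
have binE : (('C(a + b, a) * (a`! * b`!))%:R : R) = (a + b)`!%:R.
  by rewrite -{2}(addKn a b) bin_fact ?leq_addr.
rewrite stirling2E -binE !natrM mulrA; field.
by rewrite !fact_neq0 /= pnatr_eq0 -lt0n bin_gt0 leq_addr.
Qed.

Lemma stirling2_n1 n : S n 1 = (n != 0)%:R.
Proof.
rewrite stirling2E fdiffS !fdiff0 expr1n expr0n /=.
rewrite factS fact0 muln1 invr1 mul1r.
by case: n => [|n] /=; rewrite ?subrr ?subr0.
Qed.

(* The triangular recurrence, obtained from the convolution with b = 1. *)
Lemma stirling2_rec n a :
  S n a.+1 = (a.+1%:R)^-1 *
    \sum_(k < n.+1) 'C(n, k)%:R * S k a * (n - k != 0)%N%:R.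
Proof.
have := stirling2_conv n a 1; rewrite addn1 binSn => conv.
rewrite (eq_bigr (fun k : 'I_n.+1 => 'C(n, k)%:R * S k a * S (n - k) 1)).
  by rewrite conv mulrA mulVf ?mul1r // pnatr_eq0.
by move=> k _; rewrite stirling2_n1.
Qed.

Lemma stirling2_ge0 n m : 0 <= S n m.
Proof.
elim/ltn_ind: n m => n IH [|a].
  by rewrite stirling2E fdiff0 fact0 invr1 mul1r expr0n; case: (n == 0%N).
rewrite stirling2_rec mulr_ge0 ?invr_ge0 ?ler0n // sumr_ge0 // => k _.
have [kn|kn] := ltnP k n; first by rewrite mulr_ge0 ?ler0n // mulr_ge0 ?ler0n ?IH.
by rewrite (_ : (n - k == 0)%N) ?mulr0 // subn_eq0.
Qed.

Lemma stirling2_small n m : (n < m)%N -> S n m = 0.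
Proof.
elim/ltn_ind: n m => n IH [|a] // lt_na.
rewrite stirling2_rec big1 ?mulr0 // => k _.
have [kn|kn] := ltnP k n; first by rewrite IH ?mulr0 ?mul0r // (leq_trans kn).
by rewrite (_ : (n - k == 0)%N) ?mulr0 // subn_eq0.
Qed.

End Stirling.

Local Open Scope fset_scope.

Lemma mleP (m nu : mi) : reflect (forall j, (m j <= nu j)%N) (mle m nu).
Proof.
apply: (iffP allP) => [h j|h j _]; last exact: h.
by have [/h//|jm] := boolP (j \in finsupp m); rewrite fsfun_dflt.
Qed.

Lemma msubE (nu m : mi) j : msub nu m j = (nu j - m j)%N.
Proof. by rewrite /msub fsfunE; case: ifPn => // /fsfun_dflt ->. Qed.

Lemma mzeroE j : mzero j = 0%N.
Proof. by rewrite /mzero fsfunE. Qed.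

Definition madd (a b : mi) : mi :=
  [fsfun j in (finsupp a `|` finsupp b) => (a j + b j)%N].

Lemma maddE a b j : madd a b j = (a j + b j)%N.
Proof.
rewrite /madd fsfunE; case: ifPn => //; rewrite in_fsetU negb_or.
by case/andP => /fsfun_dflt -> /fsfun_dflt ->.
Qed.

Lemma mle_refl m : mle m m.
Proof. by apply/mleP. Qed.

Lemma mle_trans m n p : mle m n -> mle n p -> mle m p.
Proof. by move=> /mleP h1 /mleP h2; apply/mleP => j; exact: leq_trans (h1 j) (h2 j). Qed.

Lemma mle0 nu : mle mzero nu.
Proof. by apply/mleP => j; rewrite mzeroE. Qed.

Lemma mle_anti m n : mle m n -> mle n m -> m = n.
Proof.
by move=> /mleP h1 /mleP h2; apply/fsfunP => j; apply/eqP; rewrite eqn_leq h1 h2.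
Qed.

Lemma msub_id nu : msub nu nu = mzero.
Proof. by apply/fsfunP => j; rewrite msubE subnn mzeroE. Qed.

Lemma finsupp_sub (x : mi) (U : {fset nat}) :
  (forall j, j \notin U -> x j = 0%N) -> finsupp x `<=` U.
Proof.
move=> h; apply/fsubsetP => j; rewrite mem_finsupp; apply: contraR.
by move/h => ->.
Qed.

Lemma mle_finsupp (m nu : mi) : mle m nu -> finsupp m `<=` finsupp nu.
Proof.
move/mleP => h; apply: finsupp_sub => j /fsfun_dflt hj.
by apply/eqP; rewrite -leqn0 -[X in (_ <= X)%N]hj h.
Qed.

Lemma msub_finsupp (nu m : mi) : finsupp (msub nu m) `<=` finsupp nu.
Proof. by apply: finsupp_sub => j /fsfun_dflt hj; rewrite msubE hj. Qed.

Lemma finsupp_mzero : finsupp mzero = fset0.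
Proof. by apply/fsetP => j; rewrite mem_finsupp mzeroE inE. Qed.

Lemma mabsE (U : {fset nat}) m : finsupp m `<=` U -> mabs m = (\sum_(j <- U) m j)%N.
Proof. by move=> sU; apply: big_fset_incl => // j _ /fsfun_dflt. Qed.

Lemma mfactE (U : {fset nat}) m :
  finsupp m `<=` U -> mfact m = (\prod_(j <- U) (m j)`!)%N.
Proof. by move=> sU; apply: big_fset_incl => // j _ /fsfun_dflt ->. Qed.

Lemma mpowE (R : comNzRingType) (beta : nat -> R) (U : {fset nat}) m :
  finsupp m `<=` U -> mpow beta m = \prod_(j <- U) beta j ^+ m j.
Proof. by move=> sU; apply: big_fset_incl => // j _ /fsfun_dflt ->. Qed.

Lemma mbinomE (U : {fset nat}) nu m : finsupp nu `<=` U -> finsupp m `<=` U ->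
  mbinom nu m = (\prod_(j <- U) 'C(nu j, m j))%N.
Proof.
move=> s1 s2; apply: big_fset_incl; first by rewrite fsubUset s1 s2.
by move=> j _; rewrite in_fsetU negb_or => /andP[/fsfun_dflt -> /fsfun_dflt ->].
Qed.

Lemma mstirE (R : fieldType) (U : {fset nat}) a b :
  finsupp a `<=` U -> finsupp b `<=` U ->
  mstir (R := R) a b = \prod_(j <- U) stirling2 (a j) (b j).
Proof.
move=> s1 s2; apply: big_fset_incl; first by rewrite fsubUset s1 s2.
move=> j _; rewrite in_fsetU negb_or => /andP[/fsfun_dflt -> /fsfun_dflt ->] /=.
by rewrite /stirling2 big_ord1 /= !expr0 invr1 !mul1r.
Qed.

Lemma mabs_mzero : mabs mzero = 0%N.
Proof. by rewrite /mabs finsupp_mzero big_nil. Qed.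

Lemma mfact_mzero : mfact mzero = 1%N.
Proof. by rewrite /mfact finsupp_mzero big_nil. Qed.

Lemma mpow_mzero (R : nzRingType) (beta : nat -> R) : mpow beta mzero = 1.
Proof. by rewrite /mpow finsupp_mzero big_nil. Qed.

Lemma mbinom_id nu : mbinom nu nu = 1%N.
Proof. by rewrite /mbinom big1 // => j _; rewrite binn. Qed.

Lemma mstir00 (R : fieldType) : mstir (R := R) mzero mzero = 1.
Proof. by rewrite /mstir finsupp_mzero fsetU0 big_nil. Qed.

Lemma mabs_msub m nu : mle m nu -> (mabs m + mabs (msub nu m))%N = mabs nu.
Proof.
move=> h; rewrite (mabsE (mle_finsupp h)) (mabsE (msub_finsupp nu m)).
rewrite (mabsE (fsubset_refl _)) -big_split /=; apply: eq_bigr => j _.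
by rewrite msubE subnKC //; move/mleP: h.
Qed.

Lemma mabs_eq0 x : mabs x = 0%N -> x = mzero.
Proof.
move=> h; apply/fsfunP => j; rewrite mzeroE.
have [jx|jx] := boolP (j \in finsupp x); last by rewrite fsfun_dflt.
by move: h; rewrite /mabs (bigD1_seq j) //= => /eqP; rewrite addn_eq0 => /andP[/eqP].
Qed.

Lemma mabs_lt m nu : mle m nu -> m != nu -> (mabs m < mabs nu)%N.
Proof.
move=> h ne; rewrite -(mabs_msub h) -{1}[mabs m]addn0 ltn_add2l lt0n.
apply: contra ne => /eqP/mabs_eq0 h0; apply/eqP/fsfunP => j.
move/fsfunP: h0 => /(_ j); rewrite msubE mzeroE => /eqP; rewrite subn_eq0 => h1.
by apply/eqP; rewrite eqn_leq h1 andbT; move/mleP: h.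
Qed.

Lemma mlt_ind (P : mi -> Prop) :
  (forall nu, (forall m, mle m nu -> m != nu -> P m) -> P nu) -> forall nu, P nu.
Proof.
move=> step nu; elim/ltn_ind: {nu}(mabs nu) {-2}nu (erefl (mabs nu)) => n IH nu en.
apply: step => m hm ne; apply: (IH (mabs m)) => //.
by rewrite -en; exact: mabs_lt.
Qed.

Lemma mfact_msub w v :
  mle w v -> (mfact w * mfact (msub v w) * mbinom v w)%N = mfact v.
Proof.
move=> h; have sw := mle_finsupp h; have ss := msub_finsupp v w.
have sv := fsubset_refl (finsupp v).
rewrite (mfactE sw) (mfactE ss) (mfactE sv) (mbinomE sv sw) -!big_split /=.
by apply: eq_bigr => j _; rewrite msubE mulnC bin_fact //; move/mleP: h.
Qed.

Lemma mpow_msub (R : comNzRingType) (beta : nat -> R) w v : mle w v ->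
  mpow beta w * mpow beta (msub v w) = mpow beta v.
Proof.
move=> h; have sw := mle_finsupp h; have ss := msub_finsupp v w.
have sv := fsubset_refl (finsupp v).
rewrite (mpowE _ sw) (mpowE _ ss) (mpowE _ sv) -big_split /=.
by apply: eq_bigr => j _; rewrite msubE -exprD subnKC //; move/mleP: h.
Qed.

Lemma mstir_eq0 (R : numFieldType) a b : ~~ mle b a -> mstir (R := R) a b = 0.
Proof.
case/allPn => j jb /=; rewrite -ltnNge => lt.
rewrite /mstir (bigD1_seq j) ?fset_uniq //=; last by rewrite in_fsetU jb orbT.
by rewrite stirling2_small // mul0r.
Qed.

Definition upd (m : mi) (j k : nat) : mi := [fsfun m with j |-> k].

Lemma updE m j k i : upd m j k i = if i == j then k else m i.
Proof. exact: fsfun_withE. Qed.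

Lemma box_split_bij nu j :
  set_bij ([set m | mle m (upd nu j 0)] `*` `I_(nu j).+1) [set m | mle m nu]
          (fun p : mi * nat => upd p.1 j p.2).
Proof.
split.
- move=> [m k] /= [/mleP hm hk]; apply/mleP => i; rewrite updE.
  by case: eqP => [->//|/eqP ij]; move: (hm i); rewrite updE (negPf ij).
- move=> [m1 k1] [m2 k2]; rewrite !inE /= => -[/mleP h1 _] [/mleP h2 _] e.
  have -> : k1 = k2 by move/fsfunP: e => /(_ j); rewrite !updE eqxx.
  congr (_, _); apply/fsfunP => i; case: (eqVneq i j) => [->|ij].
    by move: (h1 j) (h2 j); rewrite !updE eqxx !leqn0 => /eqP -> /eqP ->.
  by move/fsfunP: e => /(_ i); rewrite !updE (negPf ij).
- move=> m /= /mleP hm; exists (upd m j 0, m j) => /=.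
    split; last by rewrite /= ltnS hm.
    by apply/mleP => i; rewrite !updE; case: eqP.
  by apply/fsfunP => i; rewrite !updE; case: eqP => // ->.
Qed.

Lemma box_sum_prod_seq (R : idomainType) (s : seq nat) : uniq s ->
  forall nu : mi, {subset finsupp nu <= s} ->
  finite_set [set m | mle m nu] /\ forall f : nat -> nat -> R,
  \sum_(m \in [set m | mle m nu]) \prod_(j <- s) f j (m j)
    = \prod_(j <- s) \sum_(k < (nu j).+1) f j k.
Proof.
elim: s => [|j s IH] /=.
  move=> _ nu snu; have -> : [set m | mle m nu]%classic = [set mzero]%classic.
    have nu0 : nu = mzero.
      apply/fsfunP => i; rewrite mzeroE; apply: fsfun_dflt; apply/negP => /snu.
      by rewrite in_nil.
    apply/seteqP; split => m /=; last by move=> ->; exact: mle0.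
    by rewrite nu0 => h; apply: mle_anti h (mle0 _).
  by split=> [|f]; [exact: finite_set1 | rewrite fsbig_set1 !big_nil].
case/andP => js us nu snu.
have nu'E i : i \in s -> upd nu j 0 i = nu i.
  by rewrite updE; case: eqP => // ->; rewrite (negPf js).
have snu' : {subset finsupp (upd nu j 0) <= s}.
  move=> i; rewrite mem_finsupp updE; case: (eqVneq i j) => [->|ij].
    by rewrite eqxx.
  by move=> nui; move: (snu i); rewrite mem_finsupp inE (negPf ij); apply.
have [fin' sum'] := IH us _ snu'.
have bij := box_split_bij nu j.
split.
  apply: sub_finite_set (finite_image (fun p : mi * nat => upd p.1 j p.2)
                           (finite_setX fin' (finite_II (nu j).+1))).
  by case: bij.
move=> f; rewrite (reindex_fsbig _ _ _ _ bij).
rewrite -(pair_fsbig _ (fun m k => \prod_(i <- j :: s) f i (upd m j k i)));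
  [| exact: fin' | exact: finite_II].
rewrite big_cons [X in _ = X * _]fsbig_ord.
rewrite [X in _ = _ * X](eq_big_seq (fun i => \sum_(k < (upd nu j 0 i).+1) f i k));
  last by move=> i iS; rewrite nu'E.
rewrite -sum' mulr_fsumr; apply: eq_fsbigr => m _.
rewrite mulr_fsuml; apply: eq_fsbigr => k _ /=.
rewrite big_cons updE eqxx; congr (_ * _).
rewrite big_seq_cond [RHS]big_seq_cond; apply: eq_bigr => i /andP[iS _].
by rewrite updE; case: eqP => // eij; move: js; rewrite -eij iS.
Qed.

Lemma mle_finite nu : finite_set [set m | mle m nu].
Proof. by have [] := @box_sum_prod_seq int _ (fset_uniq (finsupp nu)) nu (fun j h => h). Qed.

Lemma box_sum_prod (R : idomainType) (U : {fset nat}) nu (f : nat -> nat -> R) :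
  finsupp nu `<=` U ->
  \sum_(m \in [set m | mle m nu]) \prod_(j <- U) f j (m j)
    = \prod_(j <- U) \sum_(k < (nu j).+1) f j k.
Proof. by move=> sU; have [_ ->] := box_sum_prod_seq R (fset_uniq U) (fsubsetP sU). Qed.

Lemma fsbig_mle_top (R : nmodType) (f : mi -> R) nu :
  \sum_(m \in [set m | mle m nu]) f m
  = (f nu + \sum_(m \in [set m | mle m nu && (m != nu)]) f m)%R.
Proof.
rewrite (fsbigD1 nu); [congr (_ + _)%R; apply: eq_fsbigl | exact: mle_finite |
  exact: mle_refl].
by apply/seteqP; split => w /=; [case=> h /eqP ne; rewrite h | case/andP=> h /eqP].
Qed.

(* The multi-index Stirling convolution, coordinatewise stirling2_conv:
   sum_(m <= nu) C(nu,m) S(m,w) S(nu-m,v-w) = C(v,w) S(nu,v) for w <= v. *)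
Lemma mstir_conv (R : numFieldType) nu v w : mle w v ->
  \sum_(m \in [set m | mle m nu]) (mbinom nu m)%:R * mstir (R := R) m w
        * mstir (msub nu m) (msub v w)
  = (mbinom v w)%:R * mstir nu v.
Proof.
move=> hwv; pose U := finsupp nu `|` finsupp v.
have sn : finsupp nu `<=` U by rewrite fsubsetUl.
have sv : finsupp v `<=` U by rewrite fsubsetUr.
have sw : finsupp w `<=` U by apply: fsubset_trans (mle_finsupp hwv) sv.
have svw : finsupp (msub v w) `<=` U by apply: fsubset_trans (msub_finsupp v w) sv.
rewrite (mbinomE sv sw) (mstirE _ sn sv) natr_prod -big_split /=.
pose f j k := 'C(nu j, k)%:R * stirling2 (R := R) k (w j)
              * stirling2 (nu j - k) (v j - w j).
transitivity (\sum_(m \in [set m | mle m nu]) \prod_(j <- U) f j (m j)).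
  apply: eq_fsbigr => m; rewrite inE /= => hm.
  have sm : finsupp m `<=` U by apply: fsubset_trans (mle_finsupp hm) sn.
  have snm : finsupp (msub nu m) `<=` U.
    by apply: fsubset_trans (msub_finsupp nu m) sn.
  rewrite (mbinomE sn sm) (mstirE _ sm sw) (mstirE _ snm svw) natr_prod.
  by rewrite -!big_split /=; apply: eq_bigr => j _; rewrite !msubE.
rewrite box_sum_prod //; apply: eq_bigr => j _.
move/mleP: hwv => /(_ j) hj.
by have := stirling2_conv R (nu j) (w j) (v j - w j); rewrite subnKC // => <-.
Qed.

Definition minterval (w nu : mi) : set mi :=
  ([set v | mle v nu] `&` [set v | mle w v])%classic.

Lemma minterval_bij w nu : mle w nu ->
  set_bij (minterval w nu) [set mu | mle mu (msub nu w)]%classic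
          (fun v => msub v w).
Proof.
move=> hw; split.
- move=> v [/mleP h1 /mleP h2] /=; apply/mleP => j.
  by rewrite !msubE leq_sub2r.
- move=> v1 v2; rewrite !inE => -[_ /mleP h1] [_ /mleP h2] e.
  apply/fsfunP => j; move/fsfunP: e => /(_ j); rewrite !msubE => e.
  by rewrite -(subnK (h1 j)) e subnK.
- move=> mu /= /mleP hmu; exists (madd mu w).
    split; apply/mleP => j; rewrite maddE ?leq_addl //.
    by move: (hmu j); rewrite msubE -(leq_add2r (w j)) subnK //; move/mleP: hw.
  by apply/fsfunP => j; rewrite msubE maddE addnK.
Qed.

Lemma minterval_finite w nu : finite_set (minterval w nu).
Proof. by apply: sub_finite_set (mle_finite nu) => v []. Qed.

Lemma fsbig_minterval_exchange (R : nmodType) (F : mi -> mi -> R) nu :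
  \sum_(w \in [set w | mle w nu]) \sum_(v \in minterval w nu) F w v
  = \sum_(v \in [set v | mle v nu]) \sum_(w \in [set w | mle w v]) F w v.
Proof.
rewrite /minterval; under eq_fsbigr do rewrite fsbig_mkcondr.
rewrite (exchange_fsbig _ _ (mle_finite nu) (mle_finite nu)).
apply: eq_fsbigr => v; rewrite inE /= => hv.
rewrite -fsbig_mkcondr; apply: eq_fsbigl; apply/seteqP; split => w /=.
  by case.
by move=> h; split=> //; exact: mle_trans h hv.
Qed.

Local Close Scope fset_scope.

Lemma Pfuel0 (R : fieldType) d k : Pfuel R d k mzero = 1.
Proof. by case: k => //= k; rewrite eqxx. Qed.

Lemma Pfuel_eq (R : fieldType) d k k' m :
  (mabs m <= k)%N -> (mabs m <= k')%N -> Pfuel R d k m = Pfuel R d k' m.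
Proof.
elim: k k' m => [|k IH] [|k'] m.
- by [].
- by rewrite leqn0 => /eqP/mabs_eq0 -> _; rewrite !Pfuel0.
- by move=> _; rewrite leqn0 => /eqP/mabs_eq0 ->; rewrite !Pfuel0.
move=> hk hk' /=; case: (m == mzero) => //; congr (_ + _).
apply: eq_fsbigr => w; rewrite inE /= => /andP[hw ne].
by have lt := mabs_lt hw ne; rewrite (IH k') // -ltnS (leq_trans lt).
Qed.

Lemma PP0 (R : fieldType) d : PP (R := R) d mzero = 1.
Proof. by rewrite /PP Pfuel0. Qed.

Lemma PP_rec (R : fieldType) d m : m != mzero ->
  PP (R := R) d m = ((mabs m + d)`!)%:R / ((mfact m * d`!)%N)%:R
     + \sum_(w \in [set w | mle w m && (w != m)])
          PP (R := R) d w * ((mabs m - mabs w + 1)`!)%:R.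
Proof.
move=> ne; have pos : (0 < mabs m)%N.
  by rewrite lt0n; apply: contra ne => /eqP/mabs_eq0 ->.
rewrite {1}/PP -(prednK pos) /= (negPf ne) prednK //; congr (_ + _).
apply: eq_fsbigr => w; rewrite inE /= => /andP[hw ne'].
by rewrite /PP (Pfuel_eq _ _ _ (leqnn _)) // -ltnS prednK // mabs_lt.
Qed.

(* Summing the recursion including the top term w = v:
   sum_(w <= v) P_w (|v|-|w|+1)! = 2 P_v - (|v|+d)!/(v! d!). *)
Definition Pconv {R : fieldType} d (v : mi) : R :=
  \sum_(w \in [set w | mle w v]) PP (R := R) d w * ((mabs v - mabs w + 1)`!)%:R.

Lemma PconvE (R : numFieldType) d v :
  Pconv (R := R) d v = 2 * PP d v - ((mabs v + d)`!)%:R / ((mfact v * d`!)%N)%:R.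
Proof.
rewrite /Pconv fsbig_mle_top subnn add0n mulr1.
have [->|ne] := eqVneq v mzero.
  have -> : [set w | mle w mzero && (w != mzero)]%classic = set0.
    apply/seteqP; split => w //= /andP[h /eqP []].
    exact: mle_anti h (mle0 _).
  rewrite fsbig_set0 PP0 mabs_mzero mfact_mzero mul1n add0n divff ?fact_neq0 //.
  by rewrite addr0 mulr1 -addrA subrr addr0.
by rewrite (PP_rec _ d ne) mulr2n; ring.
Qed.

Definition bound_sum {R : numFieldType} d (beta : nat -> R) (m : mi) : R :=
  \sum_(w \in [set w | mle w m]) PP (R := R) d w * (mfact w)%:R * mpow beta w * mstir m w.

Definition kernel_coef {R : numFieldType} (beta : nat -> R) (mu : mi) : R :=
  ((mabs mu).+1`!)%:R * (mfact mu)%:R * mpow beta mu.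

Definition kernel_sum {R : numFieldType} (beta : nat -> R) (x : mi) : R :=
  \sum_(mu \in [set mu | mle mu x]) kernel_coef beta mu * mstir x mu.

(* kernel_sum 0 = 1: the top term m = nu of the convolution is bound_sum nu. *)
Lemma kernel_sum0 (R : numFieldType) (beta : nat -> R) : kernel_sum beta mzero = 1.
Proof.
rewrite /kernel_sum; have -> : [set m | mle m mzero]%classic = [set mzero]%classic.
  apply/seteqP; split => m /=; last by move=> ->; exact: mle0.
  by move=> h; apply: mle_anti h (mle0 _).
rewrite fsbig_set1 /kernel_coef mabs_mzero mfact_mzero mpow_mzero mstir00.
by rewrite !mulr1.
Qed.

(* For w <= m <= nu, the kernel sum over mu <= nu-m can be indexed by
   v in [w, nu] via mu = v - w (terms with v - w not <= nu - m vanish). *)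
Lemma kernel_sum_reindex (R : numFieldType) (g : mi -> R) nu m w :
  mle w m -> mle m nu ->
  \sum_(mu \in [set mu | mle mu (msub nu m)]) g mu * mstir (msub nu m) mu
  = \sum_(v \in minterval w nu) g (msub v w) * mstir (msub nu m) (msub v w).
Proof.
move=> hwm hmn; have hwn := mle_trans hwm hmn.
rewrite (fsbig_widen _ [set mu | mle mu (msub nu w)]%classic); first last.
- move=> mu [/= h1 h2]; rewrite /preimage /= mstir_eq0 ?mulr0 //.
  by apply/negP.
- move=> mu /= /mleP h; apply/mleP => j; apply: leq_trans (h j) _.
  by rewrite !msubE leq_sub2l //; move/mleP: hwm.
by rewrite (reindex_fsbig _ _ _ _ (minterval_bij hwn)).
Qed.

(* The central convolution identity: with X_m := C(nu,m) bound_sum(m)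
   kernel_sum(nu-m), expanding both sums gives a triple sum over
   m <= nu, w <= v <= nu; the sum over m is the Stirling convolution
   mstir_conv, and what remains is Pconv v against v! beta^v S(nu,v). *)
Lemma bound_kernel_conv (R : numFieldType) d (beta : nat -> R) nu :
  \sum_(m \in [set m | mle m nu])
     (mbinom nu m)%:R * bound_sum d beta m * kernel_sum beta (msub nu m)
  = \sum_(v \in [set v | mle v nu])
     (mfact v)%:R * mpow beta v * mstir nu v * Pconv d v.
Proof.
pose term m w v := (mbinom nu m)%:R
   * (PP (R := R) d w * (mfact w)%:R * mpow beta w * mstir m w)
   * (kernel_coef beta (msub v w) * mstir (msub nu m) (msub v w)).
pose L w v := PP (R := R) d w * ((mabs v - mabs w + 1)`!)%:R *
   ((mfact v)%:R * mpow beta v * mstir nu v).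
have expand m : mle m nu ->
    (mbinom nu m)%:R * bound_sum d beta m * kernel_sum beta (msub nu m)
    = \sum_(w \in [set w | mle w nu]) \sum_(v \in minterval w nu) term m w v.
  move=> hm; rewrite /bound_sum (fsbig_widen _ [set w | mle w nu]%classic);
    first last.
  - move=> w [/= h1 h2]; rewrite /preimage /= mstir_eq0 ?mulr0 //.
    by apply/negP.
  - by move=> w /= hw; exact: mle_trans hw hm.
  rewrite (mulr_fsumr (mbinom nu m)%:R) (mulr_fsuml (kernel_sum beta (msub nu m))).
  apply: eq_fsbigr => w; rewrite inE /= => hw.
  have [hwm|hwm] := boolP (mle w m).
    rewrite /kernel_sum (kernel_sum_reindex _ hwm hm) mulr_fsumr.
    by apply: eq_fsbigr => v _.
  rewrite mstir_eq0 // mulr0 mulr0 mul0r fsbig1 // => v _.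
  by rewrite /term mstir_eq0 // mulr0 mulr0 mul0r.
have collapse w v : mle w v ->
    \sum_(m \in [set m | mle m nu]) term m w v = L w v.
  move=> hwv.
  transitivity (PP (R := R) d w * (mfact w)%:R * mpow beta w
    * kernel_coef beta (msub v w) *
    \sum_(m \in [set m | mle m nu]) (mbinom nu m)%:R * mstir (R := R) m w
        * mstir (msub nu m) (msub v w)).
    by rewrite mulr_fsumr; apply: eq_fsbigr => m _; rewrite /term; ring.
  rewrite mstir_conv // /L /kernel_coef -(mabs_msub hwv) addKn addn1.
  by rewrite -(mfact_msub hwv) -(mpow_msub beta hwv) !natrM; ring.
transitivity (\sum_(m \in [set m | mle m nu]) \sum_(w \in [set w | mle w nu])
                \sum_(v \in minterval w nu) term m w v).
  by apply: eq_fsbigr => m; rewrite inE => /expand.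
rewrite (exchange_fsbig _ _ (mle_finite nu) (mle_finite nu)).
transitivity (\sum_(w \in [set w | mle w nu]) \sum_(v \in minterval w nu) L w v).
  apply: eq_fsbigr => w _.
  rewrite (exchange_fsbig _ _ (mle_finite nu) (minterval_finite w nu)).
  by apply: eq_fsbigr => v; rewrite inE => -[_ /collapse].
rewrite fsbig_minterval_exchange; apply: eq_fsbigr => v _.
by rewrite /Pconv mulr_fsumr; apply: eq_fsbigr => w _; rewrite /L mulrC.
Qed.

Lemma Pconv_sum (R : numFieldType) d (beta : nat -> R) nu :
  \sum_(v \in [set v | mle v nu]) (mfact v)%:R * mpow beta v * mstir nu v * Pconv d v
  = 2 * bound_sum d beta nu - \sum_(m \in [set m | mle m nu])
        ((mabs m + d)`!)%:R / (d`!)%:R * mpow beta m * mstir nu m.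
Proof.
rewrite /bound_sum !(fsbig_finite _ _ (mle_finite nu)) mulr_sumr -sumrB.
apply: eq_bigr => v _; rewrite PconvE natrM.
have hf : ((mfact v)%:R : R) != 0.
  by rewrite pnatr_eq0 -lt0n; apply: prodn_gt0 => j; exact: fact_gt0.
by field; rewrite hf fact_neq0.
Qed.

Lemma rec_rhs_bound (R : realType) c0 c d (beta : nat -> R) nu :
  rec_rhs c0 c d beta (bound_rhs c0 c d beta) nu = bound_rhs c0 c d beta nu.
Proof.
pose X m := (mbinom nu m)%:R * bound_sum d beta m * kernel_sum beta (msub nu m).
pose T := \sum_(m \in [set m | mle m nu])
            ((mabs m + d)`!)%:R / (d`!)%:R * mpow beta m * mstir nu m.
have strict : \sum_(m \in [set m | mle m nu && (m != nu)])
     (mbinom nu m)%:R * bound_rhs c0 c d beta m * c ^+ mabs (msub nu m) *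
     \sum_(mu \in [set mu | mle mu (msub nu m)])
        ((mabs mu).+1`!)%:R * (mfact mu)%:R * mpow beta mu * mstir (msub nu m) mu
   = c0 * c ^+ mabs nu * \sum_(m \in [set m | mle m nu && (m != nu)]) X m.
  rewrite mulr_fsumr; apply: eq_fsbigr => m; rewrite inE /= => /andP[hm _].
  rewrite /X -/(kernel_sum beta (msub nu m)) /bound_rhs -/(bound_sum d beta m).
  rewrite -(mabs_msub hm) exprD.
  set a := bound_sum _ _ m; set b := kernel_sum _ _; set u := c ^+ mabs m.
  set u' := c ^+ _; set C := (mbinom nu m)%:R; ring.
have top : \sum_(m \in [set m | mle m nu]) X m
           = bound_sum d beta nu + \sum_(m \in [set m | mle m nu && (m != nu)]) X m.
  by rewrite fsbig_mle_top /X msub_id kernel_sum0 mbinom_id mul1r mulr1.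
have total : \sum_(m \in [set m | mle m nu]) X m = 2 * bound_sum d beta nu - T.
  by rewrite bound_kernel_conv Pconv_sum.
rewrite /rec_rhs strict {1}/bound_rhs -/(bound_sum d beta nu) -/T -mulrDr.
congr (_ * _); move: top; rewrite total.
set F := bound_sum _ _ nu; set S := \sum_(_ \in _) X _ => top.
by clear -top; lra.
Qed.

Lemma rec_rhs_mono (R : realType) c0 c d (beta : nat -> R) (U1 U2 : mi -> R) nu :
  0 <= c -> (forall j, 0 <= beta j) ->
  (forall m, mle m nu -> m != nu -> U1 m <= U2 m) ->
  rec_rhs c0 c d beta U1 nu <= rec_rhs c0 c d beta U2 nu.
Proof.
move=> c_ge0 beta_ge0 hU; rewrite /rec_rhs lerD2r.
have fin : finite_set [set m | mle m nu && (m != nu)]%classic.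
  by apply: sub_finite_set (mle_finite nu) => m /= /andP[].
rewrite !(fsbig_finite _ _ fin) big_seq [X in _ <= X]big_seq.
apply: ler_sum => m; rewrite in_fset_set // inE /= => /andP[hm ne].
have kernel_ge0 : 0 <= \sum_(mu \in [set mu | mle mu (msub nu m)])
    ((mabs mu).+1`!)%:R * (mfact mu)%:R * mpow beta mu * mstir (msub nu m) mu.
  apply: fsumr_ge0 => mu _; rewrite !mulr_ge0 ?ler0n //.
  - by apply: prodr_ge0 => j _; rewrite exprn_ge0.
  - by apply: prodr_ge0 => j _; rewrite stirling2_ge0.
apply: (ler_wpM2r kernel_ge0); apply: (ler_wpM2r (exprn_ge0 _ c_ge0)).
by apply: (ler_wpM2l (ler0n _ _)); exact: hU.
Qed.

Lemma rec_rhs_eq (R : realType) c0 c d (beta : nat -> R) (U1 U2 : mi -> R) nu :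
  (forall m, mle m nu -> m != nu -> U1 m = U2 m) ->
  rec_rhs c0 c d beta U1 nu = rec_rhs c0 c d beta U2 nu.
Proof.
move=> hU; rewrite /rec_rhs; congr (_ + _).
by apply: eq_fsbigr => m; rewrite inE /= => /andP[hm ne]; rewrite hU.
Qed.

Unset Implicit Arguments.

Theorem lemmaA5 (R : realType) (c0 c : R) (d : nat) (beta : nat -> R)
    (Ups : mi -> R) :
  0 < c0 -> 0 < c -> (0 < d)%N ->
  (forall j, 0 <= beta j) ->
  (forall nu, 0 <= Ups nu) ->
  Ups mzero <= c0 ->
  (forall nu, Ups nu <= rec_rhs c0 c d beta Ups nu) ->
  (forall nu, Ups nu <= bound_rhs c0 c d beta nu) /\
  (Ups mzero = c0 -> (forall nu, Ups nu = rec_rhs c0 c d beta Ups nu) ->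
   forall nu, Ups nu = bound_rhs c0 c d beta nu).
Proof.
move=> _ c_gt0 _ beta_ge0 _ _ Ups_le; split.
  elim/mlt_ind => nu IH; apply: le_trans (Ups_le nu) _; rewrite -rec_rhs_bound.
  by apply: rec_rhs_mono => //; exact: ltW.
move=> _ Ups_eq; elim/mlt_ind => nu IH.
by rewrite Ups_eq -rec_rhs_bound; exact: rec_rhs_eq.
Qed.
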